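(* Let $\mathcal C'\subseteq\{0,1\}^n$ be a neural code, $c\in\{0,1\}^n$, and $CF(J_{\mathcal C'})=\{f_1,\dots,f_r\}$. Let $M=\{f\in CF(J_{\mathcal C'}) : f(c)=0\}$ and $N=CF(J_{\mathcal C'})\setminus M$. Let $L$ be the set of all products $g=f\cdot(x_i-c_i)$ with $f\in N$ and $i\in[n]$ such that (a) the polynomial $x_i-c_i-1$ does not divide $f$, and (b) $g$ is not a multiple (in $\mathbb F_2[x_1,\dots,x_n]$) of any element of $M$. Then $CF(J_{\mathcal C'\cup\{c\}})=M\cup L$.
   Context: All polynomials lie in $\mathbb F_2[x_1,\dots,x_n]$ (so $x_i-c_i$ is $x_i$ if $c_i=0$ and $1-x_i$ if $c_i=1$). A pseudo-monomial is a polynomial $\prod_{i\in\sigma}x_i\prod_{j\in\tau}(1-x_j)$ with $\sigma\cap\tau=\emptyset$. For $v\in\{0,1\}^n$ let $\rho_v=\prod_{v_i=1}x_i\prod_{v_j=0}(1-x_j)$. For a code $\mathcal C\subseteq\{0,1\}^n$, the neural ideal is $J_\mathcal C=\langle\rho_v : v\in\{0,1\}^n\setminus\mathcal C\rangle$. A pseudo-monomial $f\in J_\mathcal C$ is minimal if there is no pseudo-monomial $g\in J_\mathcal C$ of smaller degree with $f=gh$ for some polynomial $h$; the canonical form $CF(J_\mathcal C)$ is the set of all minimal pseudo-monomials in $J_\mathcal C$. *)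

From HB Require Import structures.
From mathcomp Require Import all_boot all_order all_algebra.
From mathcomp Require Import mpoly.
Set Implicit Arguments. Unset Strict Implicit. Unset Printing Implicit Defensive.
Import GRing.Theory.
Local Open Scope ring_scope.

Notation F2 := 'F_2.
Notation PolyF2 n := {mpoly F2[n]}.

Notation word n := {ffun 'I_n -> bool}.
Notation code n := {set word n}.

Definition bitF (b : bool) : F2 := (b : nat)%:R.

Definition xlin n (i : 'I_n) (b : bool) : PolyF2 n := 'X_i - (bitF b)%:MP.

Definition evalw n (f : PolyF2 n) (v : word n) : F2 := f.@[fun i => bitF (v i)].

(* Total degree (msize p = 1 + total degree for p <> 0). *)
Definition tdeg n (p : PolyF2 n) : nat := (msize p).-1.

Definition pdvd n (g f : PolyF2 n) : Prop := exists h : PolyF2 n, f = g * h.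

Definition pseudo_monomial n (f : PolyF2 n) : Prop :=
  exists sigma tau : {set 'I_n}, [disjoint sigma & tau] /\
    f = (\prod_(i in sigma) 'X_i) * (\prod_(j in tau) (1 - 'X_j)).

Definition rho n (v : word n) : PolyF2 n :=
  (\prod_(i | v i) 'X_i) * (\prod_(j | ~~ v j) (1 - 'X_j)).

Definition in_neural_ideal n (C : code n) (f : PolyF2 n) : Prop :=
  exists h : word n -> PolyF2 n, f = \sum_(v | v \notin C) h v * rho v.

Definition minimal_pm n (C : code n) (f : PolyF2 n) : Prop :=
  [/\ pseudo_monomial f, in_neural_ideal C f &
      ~ exists g : PolyF2 n, [/\ pseudo_monomial g, in_neural_ideal C g,
            (tdeg g < tdeg f)%N & pdvd g f]].

Definition in_CF n (C : code n) (f : PolyF2 n) : Prop := minimal_pm C f.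

From HB Require Import structures.
From mathcomp Require Import all_boot all_order all_algebra.
From mathcomp Require Import mpoly.
Set Implicit Arguments. Unset Strict Implicit. Unset Printing Implicit Defensive.
Import GRing.Theory.
Local Open Scope ring_scope.

(* A pseudo-monomial is determined by its set S of literals (i, b), the factor
   for (i, b) being the one that equals 1 exactly when x_i = b.  On {0,1}^n it
   is the indicator of the subcube cut out by S; it lies in J_C iff that cube
   misses C, since it is then the sum of the rho_v over the cube; divisibility
   is inclusion of literal sets and the degree is |S|.  So CF(J_C) corresponds
   to the inclusion-minimal S whose cube is nonempty and misses C.  A minimal S for
   C' u {c} contains a minimal S0 for C'; either c is already outside the cube
   of S0 and S = S0, or S adds to S0 the single literal x_i <> c_i, which is
   the product by x_i - c_i. *)

Section PseudoMonomials.
Variable n : nat.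
Notation literal := ('I_n * bool)%type.
Implicit Types (l : literal) (S T : {set literal}) (v w : word n) (C : code n).

Definition lit l : PolyF2 n := if l.2 then 'X_l.1 else 1 - 'X_l.1.
Definition pmono S : PolyF2 n := \prod_(l in S) lit l.
Definition cube S : {set word n} := [set v : word n | [forall i, (i, ~~ v i) \notin S]].
Definition lits (sigma tau : {set 'I_n}) : {set literal} :=
  [set l | l.1 \in (if l.2 then sigma else tau)].

Lemma pmonoE S : pmono S = \prod_i \prod_(b | (i, b) \in S) lit (i, b).
Proof. by rewrite pair_big_dep; apply: eq_bigl => -[]. Qed.

Lemma pmono_lits sigma tau :
  pmono (lits sigma tau) = (\prod_(i in sigma) 'X_i) * \prod_(j in tau) (1 - 'X_j).
Proof.
rewrite pmonoE [in RHS]big_mkcond [X in _ * X]big_mkcond -big_split.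
apply: eq_bigr => i _; rewrite big_mkcond big_bool !inE /lit /=.
by case: (i \in sigma); case: (i \in tau); rewrite ?mulr1 ?mul1r.
Qed.

Lemma oppr_F2 (p : PolyF2 n) : - p = p.
Proof.
by rewrite -mulN1r -mpolyC1 -mpolyCN (_ : - 1 = 1 :> F2) ?mul1r //; apply/eqP.
Qed.

Lemma xlin_lit i b : xlin i b = lit (i, ~~ b).
Proof.
rewrite /xlin /bitF /lit; case: b => /=; last by rewrite mpolyC0 subr0.
by rewrite mpolyC1 -opprB; apply: oppr_F2.
Qed.

Lemma xlin_subr1 i b : xlin i b - 1 = lit (i, b).
Proof.
rewrite xlin_lit /lit; case: b => /=; last by rewrite -opprB; apply: oppr_F2.
by rewrite addrAC subrr add0r; apply: oppr_F2.
Qed.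

Lemma pmono_set1 l : pmono [set l] = lit l.
Proof. exact: big_set1. Qed.

Lemma pmono_setU1 l S : l \notin S -> pmono (l |: S) = pmono S * lit l.
Proof. by move=> lS; rewrite /pmono big_setU1 //= mulrC. Qed.

Lemma cube_set w S i b :
  w \in cube S -> (i, ~~ b) \notin S -> [ffun j => if j == i then b else w j] \in cube S.
Proof.
rewrite !inE => /forallP wS iS; apply/forallP => j; rewrite ffunE.
by case: eqP => [-> | _]; last exact: wS.
Qed.

Lemma cubeS S T : S \subset T -> cube T \subset cube S.
Proof.
move=> sST; apply/subsetP => w; rewrite !inE => /forallP wT; apply/forallP => i.
by apply: contra (wT i); apply: (subsetP sST).
Qed.

Lemma cubeU1 l S w : (w \in cube (l |: S)) = (w l.1 == l.2) && (w \in cube S).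
Proof.
case: l => i b; rewrite !inE /=; apply/forallP/andP => [wS | [wi /forallP wS] j].
  split; last by apply/forallP => j; have := wS j; rewrite !inE negb_or => /andP[].
  by have := wS i; clear wS; rewrite !inE xpair_eqE eqxx /=; case: (w i) b => -[].
rewrite !inE negb_or wS andbT xpair_eqE negb_and.
by case: eqP => //= ->; move: wi; case: (w i) b => -[].
Qed.

Lemma cube_neq0_neg S i b : cube S != set0 -> (i, b) \in S -> (i, ~~ b) \notin S.
Proof.
case/set0Pn => w; rewrite inE => /forallP/(_ i).
by case: (w i) b => -[] //= /negbTE ->.
Qed.

Lemma pseudo_monomialP f :
  pseudo_monomial f <-> exists2 S, cube S != set0 & f = pmono S.
Proof.
split=> [[sigma [tau [dis ->]]] | [S nzS ->]].
  exists (lits sigma tau); last by rewrite pmono_lits.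
  apply/set0Pn; exists [ffun i => i \in sigma]; rewrite inE; apply/forallP => i.
  by rewrite !inE ffunE /=; case: ifP => // /negbFE iS; rewrite (disjointFr dis iS).
exists [set i | (i, true) \in S], [set i | (i, false) \in S]; split.
  rewrite -setI_eq0; apply/eqP/setP => i; rewrite !inE.
  by case tS: ((i, true) \in S) => //=; apply/negbTE/(cube_neq0_neg nzS tS).
by rewrite -pmono_lits; congr pmono; apply/setP => -[i []]; rewrite !inE.
Qed.

Lemma prod_bitF (I : finType) (P p : pred I) :
  \prod_(x | P x) bitF (p x) = bitF [forall (x | P x), p x].
Proof.
case: (boolP [forall (x | P x), p x]) => [/forall_inP H | /forall_inPn [x Px]].
  by apply: big1 => x /H ->.
by move/negbTE=> px; rewrite (bigD1 x) //= px mul0r.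
Qed.

Lemma bitF_eq0 b : bitF b = 0 <-> ~~ b.
Proof. by case: b; split=> // /eqP. Qed.

Lemma bitF_neq0 b : bitF b <> 0 <-> b.
Proof. by case: b; split=> // /eqP. Qed.

Lemma evalwM f g w : evalw (f * g) w = evalw f w * evalw g w.
Proof. exact: rmorphM. Qed.

Lemma evalw_prod (I : Type) (r : seq I) (P : pred I) (F : I -> PolyF2 n) w :
  evalw (\prod_(x <- r | P x) F x) w = \prod_(x <- r | P x) evalw (F x) w.
Proof. exact: rmorph_prod. Qed.

Lemma evalw_sum (I : Type) (r : seq I) (P : pred I) (F : I -> PolyF2 n) w :
  evalw (\sum_(x <- r | P x) F x) w = \sum_(x <- r | P x) evalw (F x) w.
Proof. exact: rmorph_sum. Qed.

Lemma evalw_lit l w : evalw (lit l) w = bitF (w l.1 == l.2).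
Proof.
rewrite /evalw /lit; case: l.2; rewrite ?mevalB ?meval1 mevalXU.
  by case: (w l.1).
by case: (w l.1); apply/eqP.
Qed.

Lemma evalw_pmono S w : evalw (pmono S) w = bitF (w \in cube S).
Proof.
rewrite evalw_prod; under eq_bigr do rewrite evalw_lit.
rewrite prod_bitF inE; congr bitF; apply/forall_inP/forallP => [wS i | wS [i b] /= iS].
  by apply/negP => /wS /=; case: (w i).
by move: (wS i); case: (w i) b iS => -[] // ->.
Qed.

Lemma rhoE v : rho v = \prod_i lit (i, v i).
Proof.
rewrite /rho [RHS](bigID (fun i => v i)) /=.
by congr (_ * _); apply: eq_bigr => i; [move=> -> | move/negbTE ->].
Qed.

Lemma evalw_rho v w : evalw (rho v) w = bitF (w == v).
Proof.
rewrite rhoE evalw_prod; under eq_bigr do rewrite evalw_lit.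
rewrite prod_bitF; congr bitF; apply/forall_inP/eqP => [wv | -> //].
by apply/ffunP => i; apply/eqP/wv.
Qed.

Lemma neural_ideal_evalw C f w : in_neural_ideal C f -> w \in C -> evalw f w = 0.
Proof.
move=> [h ->] wC; rewrite evalw_sum; apply: big1 => v vC.
rewrite evalwM evalw_rho.
by case: eqP => [wv | _]; [rewrite -wv wC in vC | rewrite mulr0].
Qed.

Lemma sum_lit_allowed S i : cube S != set0 ->
  \sum_(b | (i, ~~ b) \notin S) lit (i, b) = \prod_(b | (i, b) \in S) lit (i, b).
Proof.
move=> nzS; rewrite big_mkcond [RHS]big_mkcond !big_bool /lit /=.
case tS: ((i, true) \in S); case fS: ((i, false) \in S) => /=.
- by move: (cube_neq0_neg nzS tS); rewrite fS.
- by rewrite addr0 mulr1.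
- by rewrite add0r mul1r.
- by rewrite addrC subrK mulr1.
Qed.

Lemma pmono_sum_rho S : cube S != set0 -> pmono S = \sum_(v in cube S) rho v.
Proof.
move=> nzS; rewrite pmonoE; under eq_bigr do rewrite -sum_lit_allowed //.
rewrite bigA_distr_big_dep; apply: eq_big => [v | v _]; last by rewrite rhoE.
by rewrite !inE.
Qed.

Lemma in_neural_ideal_pmono C S : cube S != set0 ->
  in_neural_ideal C (pmono S) <-> [disjoint cube S & C].
Proof.
move=> nzS; split=> [SJ | dis].
  rewrite disjoint_subset; apply/subsetP => w wS; apply/negP => wC.
  by move: (neural_ideal_evalw SJ wC); rewrite evalw_pmono wS.
exists (fun v => if v \in cube S then 1 else 0).
rewrite pmono_sum_rho // [LHS]big_mkcond [RHS]big_mkcond; apply: eq_bigr => v _.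
case: ifP => vS; last by case: ifP; rewrite ?mul0r.
by rewrite (disjointFr dis vS) mul1r.
Qed.

Lemma pmono_pdvd S T : S \subset T -> pdvd (pmono S) (pmono T).
Proof.
move=> sST; exists (pmono (T :\: S)).
by rewrite /pmono (big_setID S) /= (setIidPr sST).
Qed.

Lemma pdvd_pmono_subset S T : cube T != set0 -> pdvd (pmono S) (pmono T) -> S \subset T.
Proof.
case/set0Pn => w0 w0T [h ST]; apply/subsetP => -[i b] iS; apply/negPn/negP => iT.
set w := [ffun j => if j == i then ~~ b else w0 j].
have wT : w \in cube T by apply: cube_set w0T _; rewrite negbK.
have wS : w \notin cube S.
  by rewrite inE negb_forall; apply/existsP; exists i; rewrite ffunE eqxx negbK negbK.
move: (congr1 (fun p => evalw p w) ST).
by rewrite /= evalwM !evalw_pmono wT (negbTE wS) mul0r.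
Qed.

Lemma msize_lit l : msize (lit l) = 2.
Proof.
rewrite /lit; case: l.2; first by rewrite msizeX mdeg1.
apply/eqP; rewrite eqn_leq; apply/andP; split.
  by apply: leq_trans (msizeD_le _ _) _; rewrite msizeN msizeX mdeg1 msize1.
have : U_(l.1)%MM \in msupp (1 - 'X_l.1 : PolyF2 n).
  rewrite mcoeff_msupp mcoeffB mcoeff1 mcoeffXU eqxx.
  by rewrite (negbTE (_ : U_(l.1)%MM != 0%MM)) ?sub0r ?oppr_eq0 // -mdeg_eq0 mdeg1.
by move/msize_mdeg_lt; rewrite mdeg1.
Qed.

Lemma tdeg_pmono S : tdeg (pmono S) = #|S|.
Proof.
rewrite /tdeg /pmono -big_enum /= cardE.
suff -> : forall s, msize (\prod_(l <- s) lit l) = (size s).+1 by [].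
elim=> [|l s IH]; first by rewrite big_nil msize1.
by rewrite big_cons msizeM -?msize_poly_eq0 ?msize_lit ?IH.
Qed.

Definition avoids C S := (cube S != set0) && [disjoint cube S & C].

Lemma in_CF_pmono C f : in_CF C f <-> exists2 S, minset (avoids C) S & f = pmono S.
Proof.
split=> [[/pseudo_monomialP [S nzS ->] SJ nomin] |
         [S /minsetP [/andP [nzS dis] minS] ->]].
  exists S => //; apply/minsetP; split.
    by rewrite /avoids nzS -in_neural_ideal_pmono.
  move=> T /andP [nzT disT] sTS; apply/eqP; rewrite eqEcard sTS leqNgt /=.
  apply/negP => ltTS; apply: nomin; exists (pmono T); split.
  - by apply/pseudo_monomialP; exists T.
  - exact/in_neural_ideal_pmono.
  - by rewrite !tdeg_pmono.
  - exact: pmono_pdvd.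
split; first by apply/pseudo_monomialP; exists S.
  exact/in_neural_ideal_pmono.
case=> g [/pseudo_monomialP [T nzT ->] TJ ltTS /(pdvd_pmono_subset nzS) sTS].
have AT : avoids C T by rewrite /avoids nzT -in_neural_ideal_pmono.
by move: ltTS; rewrite (minS T AT sTS) ltnn.
Qed.

Lemma avoidsU1 C c S : avoids (C :|: [set c]) S = avoids C S && (c \notin cube S).
Proof.
rewrite /avoids !disjoints_subset setCU subsetI andbA.
by rewrite -[X in _ && X]disjoints_subset disjoint_sym disjoints1.
Qed.

Section AddWord.
Variables (C : code n) (c : word n).
Notation A := (avoids C).
Notation A1 := (avoids (C :|: [set c])).

Lemma minset_avoidsU1_old S : minset A S -> c \notin cube S -> minset A1 S.
Proof.
move=> /minsetP [AS minS] cS; apply/minsetP; split; first by rewrite avoidsU1 AS.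
by move=> T; rewrite avoidsU1 => /andP [AT _]; apply: minS.
Qed.

Lemma avoidsU1_extend S0 i : A S0 -> c \in cube S0 -> (i, c i) \notin S0 ->
  A1 ((i, ~~ c i) |: S0).
Proof.
move=> /andP [_ disS0] cS0 iS0; rewrite avoidsU1 cubeU1 /=.
rewrite (_ : (c i == ~~ c i) = false) ?andbT; last by case: (c i).
apply/andP; split; last exact: disjointWl (cubeS (subsetUr _ _)) disS0.
apply/set0Pn; exists [ffun j => if j == i then ~~ c i else c j].
by rewrite cubeU1 /= ffunE !eqxx; apply: cube_set cS0 _; rewrite negbK.
Qed.

Lemma minset_avoidsU1_new S0 i :
  minset A S0 -> c \in cube S0 -> (i, c i) \notin S0 ->
  ~ (exists S2, [/\ minset A S2, c \notin cube S2 & S2 \subset (i, ~~ c i) |: S0]) ->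
  minset A1 ((i, ~~ c i) |: S0).
Proof.
move=> minS0 cS0 iS0 noS2; apply/minsetP; split=> [|T].
  exact: avoidsU1_extend (minsetp minS0) cS0 iS0.
rewrite avoidsU1 => /andP [AT cT] sTS.
have [S2 minS2 sS2T] := minset_exists AT.
have cS2 : c \in cube S2.
  apply: contraT => cS2; case: noS2; exists S2; split => //.
  exact: subset_trans sS2T sTS.
have sS2S0 : S2 \subset S0.
  apply/subsetP => l lS2; move: (subsetP (subset_trans sS2T sTS) l lS2).
  case/setU1P => // El; move: cS2; rewrite inE => /forallP/(_ i).
  by rewrite -El lS2.
have ES2 : S2 = S0 := minsetinf minS0 (minsetp minS2) sS2S0.
have [j jT] : exists j, (j, ~~ c j) \in T.
  by move: cT; rewrite inE negb_forall => /existsP [j /negPn]; exists j.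
have jS0 : (j, ~~ c j) \notin S0 by move: cS0; rewrite inE => /forallP.
have Ej : (j, ~~ c j) = (i, ~~ c i).
  by move: (subsetP sTS _ jT); case/setU1P => // jS; rewrite jS in jS0.
apply/eqP; rewrite eqEsubset sTS subUset sub1set -Ej jT -ES2.
exact: subset_trans sS2T _.
Qed.

Lemma minset_avoidsU1 S : minset A1 S ->
  (minset A S /\ c \notin cube S) \/
  exists S0 i, [/\ minset A S0, c \in cube S0, (i, c i) \notin S0,
    S = (i, ~~ c i) |: S0 &
    ~ exists S2, [/\ minset A S2, c \notin cube S2 & S2 \subset S]].
Proof.
move=> /minsetP [A1S minS]; move: (A1S); rewrite avoidsU1 => /andP [AS cS].
have [S0 minS0 sS0S] := minset_exists AS.
have AS0 := minsetp minS0.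
have [cS0 | cS0] := boolP (c \in cube S0); last first.
  have ES0 : S0 = S by apply: minS sS0S; rewrite avoidsU1 AS0.
  by left; rewrite -ES0.
right; have [i iS] : exists i, (i, ~~ c i) \in S.
  by move: cS; rewrite inE negb_forall => /existsP [i /negPn]; exists i.
have iS0 : (i, c i) \notin S0.
  apply: contra (cube_neq0_neg (andP AS).1 iS) => /(subsetP sS0S).
  by rewrite negbK.
have ES : S = (i, ~~ c i) |: S0.
  by apply/esym/minS; [apply: avoidsU1_extend | rewrite subUset sub1set iS].
exists S0, i; split => // -[S2 [minS2 cS2 sS2S]].
have ES2 : S2 = S by apply: minS sS2S; rewrite avoidsU1 (minsetp minS2).
rewrite ES2 in minS2; rewrite (minsetinf minS2 AS0 sS0S) in cS0.
by rewrite cS0 in cS.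
Qed.

End AddWord.

Lemma in_CF_evalw_eq0 C c f : in_CF C f /\ evalw f c = 0 <->
  exists2 S, minset (avoids C) S & f = pmono S /\ c \notin cube S.
Proof.
rewrite in_CF_pmono; split=> [[[S minS ->]] | [S minS [-> cS]]].
  by rewrite evalw_pmono bitF_eq0 => cS; exists S.
by split; [exists S | rewrite evalw_pmono bitF_eq0].
Qed.

Lemma in_CF_evalw_neq0 C c f : in_CF C f /\ evalw f c <> 0 <->
  exists2 S, minset (avoids C) S & f = pmono S /\ c \in cube S.
Proof.
rewrite in_CF_pmono; split=> [[[S minS ->]] | [S minS [-> cS]]].
  by rewrite evalw_pmono bitF_neq0 => cS; exists S.
by split; [exists S | rewrite evalw_pmono bitF_neq0].
Qed.

Lemma extension_pmono C c g :
  (exists f i, [/\ in_CF C f /\ ~ (in_CF C f /\ evalw f c = 0),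
     g = f * xlin i (c i), ~ pdvd (xlin i (c i) - 1) f &
     ~ exists m, (in_CF C m /\ evalw m c = 0) /\ pdvd m g]) <->
  exists S0 i, [/\ minset (avoids C) S0, c \in cube S0, (i, c i) \notin S0,
    g = pmono ((i, ~~ c i) |: S0) &
    ~ exists S2, [/\ minset (avoids C) S2, c \notin cube S2 &
                     S2 \subset (i, ~~ c i) |: S0]].
Proof.
have N_pmono f : in_CF C f /\ ~ (in_CF C f /\ evalw f c = 0) <->
    exists2 S, minset (avoids C) S & f = pmono S /\ c \in cube S.
  by rewrite -in_CF_evalw_neq0; tauto.
have ext_pmono S0 i : c \in cube S0 ->
    pmono S0 * xlin i (c i) = pmono ((i, ~~ c i) |: S0).
  by rewrite inE xlin_lit => /forallP cS0; rewrite pmono_setU1.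
split=> [[f [i [/N_pmono [S0 minS0 [-> cS0]] -> ndvd noM]]] |
         [S0 [i [minS0 cS0 iS0 -> noS2]]]].
  exists S0, i; rewrite ext_pmono //; split => //.
    apply/negP => iS0; apply: ndvd; rewrite xlin_subr1 -pmono_set1.
    by apply: pmono_pdvd; rewrite sub1set.
  case=> S2 [minS2 cS2 sS2]; apply: noM; exists (pmono S2); split.
    by apply/in_CF_evalw_eq0; exists S2.
  by rewrite ext_pmono //; apply: pmono_pdvd.
exists (pmono S0), i; rewrite ext_pmono //; split => //.
- by apply/N_pmono; exists S0.
- have nzS0 : cube S0 != set0 by apply/set0Pn; exists c.
  rewrite xlin_subr1 -pmono_set1 => /(pdvd_pmono_subset nzS0).
  by rewrite sub1set (negbTE iS0).
case=> m [/in_CF_evalw_eq0 [S2 minS2 [-> cS2]] dvd]; apply: noS2.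
exists S2; split => //; apply: pdvd_pmono_subset dvd.
exact: (andP (avoidsU1_extend (minsetp minS0) cS0 iS0)).1.
Qed.

End PseudoMonomials.

Theorem proposition2 (n : nat) (C' : code n) (c : word n) :
  let M := fun f : PolyF2 n => in_CF C' f /\ evalw f c = 0 in
  let N := fun f : PolyF2 n => in_CF C' f /\ ~ M f in
  let L := fun g : PolyF2 n =>
    exists (f : PolyF2 n) (i : 'I_n),
      [/\ N f, g = f * xlin i (c i),
          ~ pdvd (xlin i (c i) - 1) f &
          ~ exists m : PolyF2 n, M m /\ pdvd m g] in
  forall g : PolyF2 n, in_CF (C' :|: [set c]) g <-> (M g \/ L g).
Proof.
move=> M N L g; subst M N L => /=.
rewrite in_CF_pmono in_CF_evalw_eq0 extension_pmono; split.
- case=> S /minset_avoidsU1 [[minS cS] | [S0 [i [minS0 cS0 iS0 ES noS2]]]] ->.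
    by left; exists S.
  by right; exists S0, i; rewrite -ES.
case=> [[S minS [-> cS]] | [S0 [i [minS0 cS0 iS0 -> noS2]]]].
  by exists S => //; apply: minset_avoidsU1_old.
by exists ((i, ~~ c i) |: S0) => //; apply: minset_avoidsU1_new.
Qed.
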